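(* In any execution of $\mathtt{search}(\mathcal{G},T)$ (defined in the context), let $t$ be a tangle returned by extract-tangles$(Z,\sigma)$ in an iteration whose region has priority $p$, $\alpha\equiv p\pmod 2$. Then, at that moment, every vertex $v\in E_T(t)$ (computed in the full game $\mathcal{G}$) lies in $\mathrm{dom}(r)$ and satisfies $r(v)\equiv\alpha\pmod 2$; that is, all successors of $t$ lie in higher $\alpha$-regions.
   Context: Parity games: $\mathcal{G}=(V_0,V_1,E,\mathrm{pr})$, $V=V_0\cup V_1$ finite, partitioned into vertices of Even ($0$) and Odd ($1$); $E\subseteq V\times V$ with every vertex having a successor; $\mathrm{pr}:V\to\{0,\dots,d\}$. $E(u)=\{v:(u,v)\in E\}$, $\mathrm{pr}(U)=\max_{u\in U}\mathrm{pr}(u)$, $\mathrm{pr}^{-1}(p)$ the set of vertices of priority $p$, $\overline{\alpha}=1-\alpha$. A cycle is won by $\alpha$ if its highest priority has parity $\alpha$. A strategy of $\alpha$ is a partial function $\sigma$ on $V_\alpha$ with $\sigma(v)\in E(v)$. For $U\subseteq V$, $\mathcal{G}\cap U$ is the subgame with vertices $V\cap U$ and edges $E\cap(U\times U)$, and $\mathcal{G}\setminus U=\mathcal{G}\cap(V\setminus U)$. A $p$-tangle is a nonempty $U\subseteq V$ with $p=\mathrm{pr}(U)$ such that for $\alpha\equiv p\pmod 2$ there is a strategy $\sigma:U\cap V_\alpha\to U$ (witness strategy $\sigma_T(U)$) with $(U,E\cap(\sigma\cup((U\cap V_{\overline{\alpha}})\times U)))$ strongly connected and all its cycles won by $\alpha$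 (''won by $\alpha$''). For a tangle $t$ won by $\alpha$ in a game with edge set $E$, $E_T(t)=\{v\notin t:\exists u\in t\cap V_{\overline{\alpha}},(u,v)\in E\}$. $T_\alpha$ denotes the tangles of $T$ won by $\alpha$; for a subgame $\mathcal{G}'$, $T\cap\mathcal{G}'$ denotes the tangles of $T$ contained in its vertex set. Tangle attractor: for a game $\mathcal{G}$ with vertices $V$, tangles $T$, player $\alpha$ and $A\subseteq V$, $\mathit{TAttr}^{\mathcal{G},T}_\alpha(A)$ is the least $Z\supseteq A$ containing every $v\in V_\alpha$ with $E(v)\cap Z\neq\emptyset$, every $v\in V_{\overline{\alpha}}$ with $E(v)\subseteq Z$, and every vertex of every $t\in T_\alpha$ with $\emptyset\neq E_T(t)\subseteq Z$ ($E_T$ computed in $\mathcal{G}$). It is computed iteratively together with a strategy $\sigma$ of $\alpha$ (initially empty): when an $\alpha$-vertex is added individually, $\sigma$ maps it to a successor already in $Z$; each $\alpha$-vertex of $A$ gets as $\sigma$-value a successor in $Z$ once one exists; when the vertices of a tangle $t$ are added, $\sigma(u):=\sigma_T(t)(u)$ for every $\alpha$-vertex $u\in t$ not yet in $\mathrm{dom}(\sigma)$. extract-tangles$(Z,\sigma)$, for a subgame $\mathcal{G}'=(V',E')$ with top priority $p$, $\alpha\equiv p$, region $Z\subseteq V'$ and strategy $\sigma$: let $Y$ be the greatest $X\subseteq Z$ such that every $v\in X\cap V_{\overline{\alpha}}$ has $E'(v)\subseteq X$ and every $v\in X\cap V_\alpha$ has $\sigma(v)\in X$; let $H$ be the graph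 on $Y$ with edges $(v,\sigma(v))$ for $v\in Y\cap V_\alpha$ and $(v,w)\in E'$ for $v\in Y\cap V_{\overline{\alpha}}$; return all bottom strongly connected components of $H$ that contain at least one edge of $H$, each with witness strategy $\sigma$ restricted to it. $\mathtt{search}(\mathcal{G},T)$ (with $T$ a set of tangles of $\mathcal{G}$): repeat forever: set $r:=\emptyset$ (a partial function $V\to\mathbb{N}$, the region function; a region recorded with priority $q$ is called an $\alpha$-region when $q\equiv\alpha\pmod 2$) and $Y:=\emptyset$; while $V\setminus\mathrm{dom}(r)\neq\emptyset$: let $\mathcal{G}':=\mathcal{G}\setminus\mathrm{dom}(r)$ with vertex set $V'$, $T':=T\cap\mathcal{G}'$, $p:=\mathrm{pr}(\mathcal{G}')$, $\alpha:=p\bmod 2$; compute $(Z,\sigma):=\mathit{TAttr}^{\mathcal{G}',T'}_\alpha(\mathrm{pr}^{-1}(p)\cap V')$ (the region of priority $p$); let $A:=$ extract-tangles$(Z,\sigma)$; if some $t\in A$ has $E_T(t)=\emptyset$ with $E_T$ computed in the full game $\mathcal{G}$, return $(T\cup Y,t)$; otherwise set $r(v):=p$ for all $v\in Z$ and $Y:=Y\cup A$. After the while-loop, set $T:=T\cup Y$. *)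

From mathcomp Require Import all_boot.
Set Implicit Arguments. Unset Strict Implicit. Unset Printing Implicit Defensive.

(* Players are booleans: Even = false, Odd = true; a priority q has
   player [odd q].  [owner v] is the player owning v (V_0 / V_1 partition),
   [E] the edge relation and [pr] the priority function.                    *)

Section ParityGames.
Variables (V : finType) (owner : V -> bool) (E : rel V) (pr : V -> nat).

Definition prs (U : {set V}) : nat := \max_(v in U) pr v.

(* A tangle together with its witness strategy (a partial function,
   encoded as an option-valued finite function). *)
Definition tangle_t := ({set V} * {ffun V -> option V})%type.

Definition subE (W : {set V}) : rel V :=
  fun x y => [&& x \in W, y \in W & E x y].

Definition tangle_graph (a : bool) (U : {set V}) (s : {ffun V -> option V}) : rel V :=
  fun x y => [&& x \in U, y \in U &
              if owner x == a then s x == Some y else E x y].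

Definition is_tangle (t : tangle_t) : Prop :=
  let U := t.1 in let s := t.2 in let a := odd (prs U) in
  [/\ U != set0,
      (forall u, u \in U -> owner u = a ->
         exists2 w, s u = Some w & (w \in U) && E u w),
      (forall x y, x \in U -> y \in U -> connect (tangle_graph a U s) x y) &
      (* every cycle (closed walk of length >= 1) is won by a *)
      (forall x (c : seq V), c != [::] -> path (tangle_graph a U s) x c ->
         last x c = x -> odd (\max_(v <- c) pr v) = a)].

Definition ET (W : {set V}) (a : bool) (U : {set V}) : {set V} :=
  [set v | (v \notin U) &&
           [exists u in U, (owner u == ~~ a) && subE W u v]].

Definition astate := ({set V} * {ffun V -> option V})%type.

Definition upd (s : {ffun V -> option V}) (x : V) (o : option V) :=
  [ffun y => if y == x then o else s y].

Definition pending (W : {set V}) (a : bool) (A : {set V}) (st : astate) : bool :=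
  [exists x in A, [&& owner x == a, st.2 x == None &
                      [exists w in st.1, subE W x w]]].

Inductive attr_step (W : {set V}) (T : {set tangle_t}) (a : bool) (A : {set V})
  : astate -> astate -> Prop :=
| AssignA (Z : {set V}) (s : {ffun V -> option V}) x w :
    x \in A -> owner x = a -> s x = None -> w \in Z -> subE W x w ->
    attr_step W T a A (Z, s) (Z, upd s x (Some w))
| AttrOwn (Z : {set V}) (s : {ffun V -> option V}) v w :
    ~~ pending W a A (Z, s) ->
    v \in W -> v \notin Z -> owner v = a -> w \in Z -> subE W v w ->
    attr_step W T a A (Z, s) (v |: Z, upd s v (Some w))
| AttrOpp (Z : {set V}) (s : {ffun V -> option V}) v :
    ~~ pending W a A (Z, s) ->
    v \in W -> v \notin Z -> owner v = ~~ a ->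
    (forall w, subE W v w -> w \in Z) ->
    attr_step W T a A (Z, s) (v |: Z, s)
| AttrTangle (Z : {set V}) (s : {ffun V -> option V}) (t : tangle_t) :
    ~~ pending W a A (Z, s) ->
    t \in T -> t.1 \subset W -> odd (prs t.1) = a ->
    ~~ (t.1 \subset Z) ->
    ET W a t.1 != set0 -> ET W a t.1 \subset Z ->
    attr_step W T a A (Z, s)
      (Z :|: t.1,
       [ffun u => if [&& u \in t.1, owner u == a & s u == None]
                  then t.2 u else s u]).

Inductive star (R : astate -> astate -> Prop) : astate -> astate -> Prop :=
| star_refl x : star R x x
| star_step x y z : R x y -> star R y z -> star R x z.

Definition TAttr_result (W : {set V}) (T : {set tangle_t}) (a : bool)
    (A : {set V}) (res : astate) : Prop :=
  star (attr_step W T a A) (A, [ffun => None]) res /\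
  forall st, ~ attr_step W T a A res st.

Definition closedX (W : {set V}) (a : bool) (s : {ffun V -> option V})
    (X : {set V}) : bool :=
  [forall v in X, if owner v == a
                  then [exists w in X, s v == Some w]
                  else [forall w, subE W v w ==> (w \in X)]].

Definition ext_Y (W : {set V}) (a : bool) (Z : {set V}) (s : {ffun V -> option V}) :=
  [set v | [exists X : {set V}, [&& X \subset Z, closedX W a s X & v \in X]]].

Definition ext_H (W : {set V}) (a : bool) (Z : {set V}) (s : {ffun V -> option V}) : rel V :=
  fun x y => let Y := ext_Y W a Z s in
    [&& x \in Y, y \in Y & if owner x == a then s x == Some y else subE W x y].

Definition is_bscc (H : rel V) (Y C : {set V}) : bool :=
  [&& [exists x in Y, C == [set y in Y | connect H x y && connect H y x]],
      [forall x in C, forall y, H x y ==> (y \in C)] &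
      [exists x in C, exists y in C, H x y]].

Definition restrict (s : {ffun V -> option V}) (C : {set V}) : {ffun V -> option V} :=
  [ffun v => if v \in C then s v else None].

Definition extract_tangles (W : {set V}) (a : bool) (Z : {set V})
    (s : {ffun V -> option V}) : {set tangle_t} :=
  [set t : tangle_t | is_bscc (ext_H W a Z s) (ext_Y W a Z s) t.1 &&
                      (t.2 == restrict s t.1)].

Definition undom (r : {ffun V -> option nat}) : {set V} := [set v | r v == None].

Definition region_prio (r : {ffun V -> option nat}) : nat := prs (undom r).

Definition region_base (r : {ffun V -> option nat}) : {set V} :=
  [set v in undom r | pr v == region_prio r].

(* search states (T, r, Y) at the head of the inner while-loop,
   reachable in some execution of search(G, T0) *)
Inductive search_reach (T0 : {set tangle_t})
  : {set tangle_t} -> {ffun V -> option nat} -> {set tangle_t} -> Prop :=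
| SR_init : search_reach T0 T0 [ffun => None] set0
| SR_inner T r Y (Z : {set V}) (s : {ffun V -> option V}) :
    search_reach T0 T r Y ->
    undom r != set0 ->
    TAttr_result (undom r) [set t in T | t.1 \subset undom r]
      (odd (region_prio r)) (region_base r) (Z, s) ->
    (* no returned tangle escapes in the full game, so search continues *)
    (forall t, t \in extract_tangles (undom r) (odd (region_prio r)) Z s ->
       ET [set: V] (odd (region_prio r)) t.1 != set0) ->
    search_reach T0 T
      [ffun v => if v \in Z then Some (region_prio r) else r v]
      (Y :|: extract_tangles (undom r) (odd (region_prio r)) Z s)
| SR_outer T r Y :
    search_reach T0 T r Y ->
    undom r = set0 ->
    search_reach T0 (T :|: Y) [ffun => None] set0.

End ParityGames.

From mathcomp Require Import all_boot.
Set Implicit Arguments. Unset Strict Implicit.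

(* A tangle t extracted from an alpha-region is closed under the moves of the
   opponent inside the current subgame, so an escape u -> v from t leaves the
   subgame: v already lies in a higher region, of priority q say.  When that
   region was attracted, u was still in the subgame but not attracted, so u is
   not owned by the player of q.  As u is owned by the opponent of alpha, the
   region of v is an alpha-region. *)

Section Search.
Variables (V : finType) (owner : V -> bool) (E : rel V) (pr : V -> nat).

Lemma star_attr_step_sub W T a A st st' :
  star (attr_step owner E pr W T a A) st st' -> st.1 \subset W -> st'.1 \subset W.
Proof.
elim=> // x y z step _ IH xW; apply: IH.
case: step xW => //= [Z s v w _ vW _ _ _ _ | Z s v _ vW _ _ _ | Z s t _ _ tW _ _ _ _] ZW;
  by rewrite subUset ?sub1set ?vW ?tW ZW.
Qed.

Lemma TAttr_result_sub W T a A Z s :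
  TAttr_result owner E pr W T a A (Z, s) -> A \subset W -> Z \subset W.
Proof. by case=> attrZ _; apply: (star_attr_step_sub attrZ). Qed.

Lemma TAttr_result_not_pending W T a A Z s :
  TAttr_result owner E pr W T a A (Z, s) -> ~~ pending owner E W a A (Z, s).
Proof.
case=> _ final; apply/existsP => -[x /andP[xA /and3P[/eqP ox /eqP sx]]].
by case/existsP=> w /andP[wZ xw]; apply: (final (Z, upd s x (Some w))); apply: AssignA.
Qed.

Lemma TAttr_result_own_closed W T a A Z s x w :
  TAttr_result owner E pr W T a A (Z, s) ->
  x \in W -> owner x = a -> w \in Z -> subE E W x w -> x \in Z.
Proof.
move=> attrZ xW ox wZ xw; apply/negPn/negP => xZ.
have not_pending := TAttr_result_not_pending attrZ.
case: attrZ => _ final; apply: (final (x |: Z, upd s x (Some w))).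
exact: AttrOwn.
Qed.

Lemma region_base_sub r : region_base pr r \subset undom r.
Proof. by apply/subsetP => x /setIdP[]. Qed.

Lemma search_reach_edge_into_region T0 T r Y x y q :
  search_reach owner E pr T0 T r Y ->
  r x = None -> r y = Some q -> E x y -> owner x = ~~ odd q.
Proof.
move=> reach; elim: reach x y q => {T r Y} [|T r Y Z s _ IH _ attrZ _|T r Y _ _ _] x y q;
  rewrite ?ffunE //.
case: ifP => // xZ rx; case: ifP => yZ; last exact: IH.
case=> <- xy; suff: owner x != odd (region_prio pr r).
  by case: (owner x) (odd (region_prio pr r)) => [] [].
apply/negP => /eqP ox.
have ZW := TAttr_result_sub attrZ (region_base_sub r).
have xW : x \in undom r by rewrite inE rx.
have xy_sub : subE E (undom r) x y by rewrite /subE xW (subsetP ZW) ?yZ.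
by rewrite (TAttr_result_own_closed attrZ xW ox yZ xy_sub) in xZ.
Qed.

Lemma ext_Y_sub W a Z s : ext_Y owner E W a Z s \subset Z.
Proof. by apply/subsetP => v; rewrite inE => /existsP[X /and3P[/subsetP XZ _ /XZ]]. Qed.

Lemma ext_Y_opp_succ W a Z s u v :
  u \in ext_Y owner E W a Z s -> owner u != a -> subE E W u v ->
  v \in ext_Y owner E W a Z s.
Proof.
rewrite !inE => /existsP[X /and3P[XZ closedX uX]] ou uv.
apply/existsP; exists X; rewrite XZ closedX /=.
by move/forallP: closedX => /(_ u); rewrite uX (negbTE ou) => /forallP/(_ v)/implyP; apply.
Qed.

Lemma extract_tangles_sub W a Z s t :
  t \in extract_tangles owner E W a Z s -> t.1 \subset ext_Y owner E W a Z s.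
Proof.
by rewrite inE => /andP[/and3P[/existsP[x /andP[_ /eqP ->]] _ _] _]; apply/subsetP => y /setIdP[].
Qed.

Lemma extract_tangles_opp_succ W a Z s t u v :
  t \in extract_tangles owner E W a Z s ->
  u \in t.1 -> owner u != a -> subE E W u v -> v \in t.1.
Proof.
move=> tZ ut ou uv; have /subsetP tY := extract_tangles_sub tZ.
move: tZ; rewrite inE => /andP[/and3P[_ /forallP/(_ u) closed_t _] _].
move: closed_t; rewrite ut => /forallP/(_ v)/implyP; apply.
by rewrite /ext_H tY // (ext_Y_opp_succ (tY _ ut) ou uv) (negbTE ou).
Qed.

End Search.

Theorem lemma4 (V : finType) (owner : V -> bool) (E : rel V) (pr : V -> nat)
  (Htotal : forall v, exists w, E v w)
  (T0 : {set tangle_t V})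
  (HT0 : forall t, t \in T0 -> is_tangle owner E pr t)
  (T : {set tangle_t V}) (r : {ffun V -> option nat}) (Y : {set tangle_t V})
  (Hreach : search_reach owner E pr T0 T r Y)
  (Hloop : undom r != set0)
  (Z : {set V}) (s : {ffun V -> option V})
  (Hattr : TAttr_result owner E pr (undom r)
             [set t in T | t.1 \subset undom r]
             (odd (region_prio pr r)) (region_base pr r) (Z, s))
  (t : tangle_t V)
  (Ht : t \in extract_tangles owner E (undom r) (odd (region_prio pr r)) Z s) :
  forall v, v \in ET owner E [set: V] (odd (region_prio pr r)) t.1 ->
    exists2 q, r v = Some q & odd q = odd (region_prio pr r).
Proof.
set a := odd (region_prio pr r) in Hattr Ht *.
move=> v /setIdP[vt /existsP[u /and3P[ut /eqP ou /and3P[_ _ uv]]]].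
have opp_u : owner u != a by rewrite ou; case: a {Hattr Ht ou}.
have ZW := TAttr_result_sub Hattr (region_base_sub pr r).
have tW : t.1 \subset undom r.
  exact: subset_trans (extract_tangles_sub Ht) (subset_trans (ext_Y_sub _ _ _ _ _ _) ZW).
have uW := subsetP tW u ut.
case rv: (r v) => [q|]; last first.
  have uv_sub : subE E (undom r) u v by rewrite /subE uW inE rv.
  by rewrite (extract_tangles_opp_succ Ht ut opp_u uv_sub) in vt.
exists q => //; apply: negb_inj; rewrite -ou; apply/esym.
by apply: search_reach_edge_into_region Hreach _ rv uv; move: uW; rewrite inE => /eqP.
Qed.
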